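(* Let $n\ge 2$, $\alpha\in[0,\pi/2)$, $A\in\Pi_{s,\alpha}^n$ and $q\in\mathbb{C}$ with $0<|q|\le 1$. Then (a) $\cos(\alpha)\,w_q(A)\le\|\mathcal{R}(A)\|$; (b) $|q|\cos(\alpha)\,w_q(A)\le w_q(\mathcal{R}(A))$.
   Context: For $\alpha\in[0,\pi/2)$, $S_\alpha=\{z\in\mathbb{C}:\operatorname{Re}z>0,\ |\operatorname{Im}z|\le\tan(\alpha)\operatorname{Re}z\}$, and $\Pi_{s,\alpha}^n$ is the set of $n\times n$ complex matrices $A$ whose numerical range $W(A)=\{\langle Ax,x\rangle:\|x\|=1\}$ is contained in $S_\alpha$ (sectorial matrices). $\mathcal{R}(A)=\frac{A+A^*}{2}$. $\|\cdot\|$ is the operator (spectral) norm. For $|q|\le1$, the $q$-numerical radius is $w_q(A)=\sup\{|\langle Ax,y\rangle|:\|x\|=\|y\|=1,\ \langle x,y\rangle=q\}$. *)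

From HB Require Import structures.
From mathcomp Require Import all_boot all_order all_algebra.
From mathcomp Require Import all_classical all_reals all_analysis.
From mathcomp Require Import complex.
Set Implicit Arguments. Unset Strict Implicit. Unset Printing Implicit Defensive.
Import Order.TTheory GRing.Theory Num.Theory.
Local Open Scope ring_scope.
Local Open Scope classical_set_scope.

Section Defs.
Variable R : realType.
Local Notation C := R[i].

Definition cabs (z : C) : R := Normc.normc z.

Definition cconj (z : C) : C := conjc z.

Definition cinner n (x y : 'cV[C]_n) : C := \sum_(i < n) x i 0 * cconj (y i 0).

Definition vnorm n (x : 'cV[C]_n) : R := Num.sqrt (complex.Re (cinner x x)).

Definition adjmx n (A : 'M[C]_n) : 'M[C]_n := map_mx cconj A^T.

Definition realpart n (A : 'M[C]_n) : 'M[C]_n := (2%:R : C)^-1 *: (A + adjmx A).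

Definition opnorm n (A : 'M[C]_n) : R :=
  sup [set vnorm (A *m x) | x in [set x : 'cV[C]_n | vnorm x = 1]].

Definition numrange n (A : 'M[C]_n) : set C :=
  [set cinner (A *m x) x | x in [set x : 'cV[C]_n | vnorm x = 1]].

Definition sector (alpha : R) : set C :=
  [set z : C | 0 < complex.Re z /\ `|complex.Im z| <= tan alpha * complex.Re z].

Definition sectorial n (alpha : R) (A : 'M[C]_n) : Prop :=
  numrange A `<=` sector alpha.

Definition qnumrad n (q : C) (A : 'M[C]_n) : R :=
  sup [set r : R | exists x y : 'cV[C]_n,
        [/\ vnorm x = 1, vnorm y = 1, cinner x y = q &
             r = cabs (cinner (A *m x) y)]].

End Defs.

(* Write B(x, y) = <Ax, y> as h(x, y) + i k(x, y), where h and k are the Hermitian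
   forms of R(A) and I(A).  Sectoriality says |k(z, z)| <= t h(z, z) for t = tan(alpha),
   so the Hermitian forms t h + k and t h - k are positive semidefinite.  From
   2t B = (1 + it)(t h + k) + (1 - it)(t h - k) and the Cauchy-Schwarz inequality for
   these two forms, |B(x, y)|^2 <= (1 + t^2) h(x, x) h(y, y), hence
   cos(alpha) |B(x, y)| <= max (h(x, x), h(y, y)).  For unit z, h(z, z) = <R(A)z, z> is at
   most ||R(A)||, which gives (a).  For (b), if <x, y> = q then v = 2 conj(q) x - y is a
   unit vector with <x, v> = q and <R(A)x, y> + <R(A)x, v> = 2q h(x, x), so that
   |q| h(x, x) <= w_q(R(A)); symmetrically u = 2q y - x bounds |q| h(y, y). *)

From HB Require Import structures.
From mathcomp Require Import all_boot all_order all_algebra.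
From mathcomp Require Import all_classical all_reals all_analysis.
From mathcomp Require Import complex ring lra.
Set Implicit Arguments. Unset Strict Implicit. Unset Printing Implicit Defensive.
Import Order.TTheory GRing.Theory Num.Theory.
Local Open Scope ring_scope.
Local Open Scope complex_scope.
Local Notation Re := complex.Re.
Local Notation Im := complex.Im.

Lemma le_mul_of_quadratic_ge0 (R : realFieldType) (p q m : R) :
  0 <= q -> 0 <= m -> (forall s, 0 <= p - 2 * s * m + s ^+ 2 * m * q) -> m <= p * q.
Proof.
move=> q0 m0 quad_ge0; have [qgt0|qle0] := ltrP 0 q.
  have := quad_ge0 q^-1.
  have -> : p - 2 * q^-1 * m + q^-1 ^+ 2 * m * q = (p * q - m) / q.
    by field; rewrite gt_eqF.
  by rewrite pmulr_lge0 ?invr_gt0 // subr_ge0.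
have q_eq0 : q = 0 by apply/le_anti; rewrite qle0 q0.
rewrite q_eq0 mulr0; apply/negP => /negP; rewrite -ltNge => mgt0.
have := quad_ge0 ((p + 1) / (2 * m)).
have -> : p - 2 * ((p + 1) / (2 * m)) * m + ((p + 1) / (2 * m)) ^+ 2 * m * q = -1.
  by rewrite q_eq0 mulr0 addr0; field; rewrite gt_eqF.
by rewrite ler0N1.
Qed.

Lemma sqr_add_le_mul (R : realFieldType) (u v a1 a2 b1 b2 : R) :
  0 <= u -> 0 <= v -> 0 <= a1 -> 0 <= a2 -> 0 <= b1 -> 0 <= b2 ->
  u ^+ 2 <= a1 * b1 -> v ^+ 2 <= a2 * b2 -> (u + v) ^+ 2 <= (a1 + a2) * (b1 + b2).
Proof.
move=> u0 v0 a10 a20 b10 b20 hu hv.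
have uv2 : (2 * (u * v)) ^+ 2 <= (a1 * b2 + a2 * b1) ^+ 2.
  have := ler_pM (sqr_ge0 u) (sqr_ge0 v) hu hv.
  have := sqr_ge0 (a1 * b2 - a2 * b1).
  nra.
have uv : 2 * (u * v) <= a1 * b2 + a2 * b1.
  by rewrite -(ler_pXn2r (n := 2)) ?nnegrE ?addr_ge0 ?mulr_ge0.
nra.
Qed.

Lemma le_sqr_of_rotation_bound (R : rcfType) (t N w X : R) : 0 < t -> 0 <= N ->
  2 * t * N <= Num.sqrt (1 + t ^+ 2) * w -> w ^+ 2 <= 4 * t ^+ 2 * X ->
  N ^+ 2 <= (1 + t ^+ 2) * X.
Proof.
move=> t0 N0 tri w2; have s0 : 0 <= 1 + t ^+ 2 by rewrite addr_ge0 ?sqr_ge0.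
rewrite -(@ler_pM2l _ (4 * t ^+ 2)) ?mulr_gt0 ?exprn_gt0 //.
have -> : 4 * t ^+ 2 * N ^+ 2 = (2 * t * N) ^+ 2 by ring.
have tN0 : 0 <= 2 * t * N by rewrite !mulr_ge0 // ltW.
apply: le_trans (_ : (Num.sqrt (1 + t ^+ 2) * w) ^+ 2 <= _).
  by apply: lerXn2r; rewrite ?nnegrE //; apply: le_trans tN0 tri.
by rewrite exprMn sqr_sqrtr // [X in _ <= X]mulrCA ler_wpM2l.
Qed.

Lemma le_of_forall_le_mul (R : rcfType) (b X : R) : 0 <= X ->
  (forall t, 0 < t -> b <= (1 + t ^+ 2) * X) -> b <= X.
Proof.
move=> X0 hb; apply/ler_addgt0Pr => e e0.
have X1 : 0 < X + 1 by lra.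
have q0 : 0 <= e / (X + 1) by rewrite ltW // divr_gt0.
apply: le_trans (hb (Num.sqrt (e / (X + 1))) _) _; first by rewrite sqrtr_gt0 divr_gt0.
rewrite sqr_sqrtr // mulrDl mul1r lerD2l mulrAC ler_pdivrMr // ler_pM2l //; lra.
Qed.

Lemma sup_ge0 (R : realType) (E : set R) : (forall r, E r -> 0 <= r) -> 0 <= sup E.
Proof.
move=> E_ge0; have [[[r Er] E_ub]|E_nsup] := pselect (has_sup E); last by rewrite sup_out.
exact: le_trans (E_ge0 r Er) (ub_le_sup E_ub Er).
Qed.

Lemma sup_le_of_ge0_ub (R : realType) (E : set R) (b : R) : 0 <= b ->
  (forall r, E r -> r <= b) -> sup E <= b.
Proof.
move=> b0 Eb; have [[E_ne _]|E_nsup] := pselect (has_sup E); last by rewrite sup_out.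
exact: ge_sup.
Qed.

Lemma cos_gt0_lt_pihalf (R : realType) (a : R) : 0 <= a -> a < pi / 2 -> 0 < cos a.
Proof.
move=> a_ge0 a_lt; apply: cos_gt0_pihalf; rewrite a_lt andbT (lt_le_trans _ a_ge0) //.
by rewrite oppr_lt0 divr_gt0 ?pi_gt0.
Qed.

Section ComplexModulus.
Variable R : realType.
Local Notation C := R[i].
Implicit Types (a b z : C) (r : R).

Lemma cabs_ge0 z : 0 <= cabs z.
Proof. by case: z => a b; apply: sqrtr_ge0. Qed.

Lemma cabsM a b : cabs (a * b) = cabs a * cabs b.
Proof. exact: Normc.normcM. Qed.

Lemma cabsD a b : cabs (a + b) <= cabs a + cabs b.
Proof. exact: le_normcD. Qed.

Lemma cabs_real r : cabs r%:C = `|r|.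
Proof. by rewrite /cabs /= expr0n /= addr0 sqrtr_sqr. Qed.

Lemma cabs_complex r : cabs (1 +i* r) = Num.sqrt (1 + r ^+ 2).
Proof. by rewrite /cabs /= expr1n. Qed.

Lemma sqr_cabs z : (cabs z ^+ 2)%:C = z * conjc z.
Proof. by rewrite -sqr_normc rmorphXn. Qed.

Lemma Re_ge0 z : 0 <= z -> 0 <= Re z.
Proof. by rewrite lecE => /andP[]. Qed.

Lemma ge0_ReE z : 0 <= z -> z = (Re z)%:C.
Proof. by move=> z0; rewrite RRe_real // ger0_real. Qed.

Lemma conjc_fixE z : conjc z = z -> z = (Re z)%:C.
Proof. by case: z => a b [] bN; congr Complex; lra. Qed.

Lemma conjc_realC r : conjc r%:C = r%:C.
Proof. by rewrite /= oppr0. Qed.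

Lemma conjc_realM r z : conjc (r%:C * z) = r%:C * conjc z.
Proof. by case: z => a b /=; congr Complex; ring. Qed.

Lemma conjc_Ni z : conjc (- 'i * z) = 'i * conjc z.
Proof. by case: z => a b /=; congr Complex; ring. Qed.

Lemma complexE_real (a b : R) : a +i* b = a%:C + 'i * b%:C.
Proof. by rewrite [LHS]complexE. Qed.

Lemma Re_realM r z : Re (r%:C * z) = r * Re z.
Proof. by case: z => a b /=; ring. Qed.

Lemma Im_realM r z : Im (r%:C * z) = r * Im z.
Proof. by case: z => a b /=; ring. Qed.

Lemma rotation_decomp r a b :
  (2 * r)%:C * (a + 'i * b) =
  (1 +i* r) * (r%:C * a + 1%:C * b) + (1 -i* r) * (r%:C * a + (-1)%:C * b).
Proof.
rewrite !complexE_real !(rmorphM, rmorphN, rmorph_nat, rmorph1) /=.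
by move: r%:C => s; ring.
Qed.

Lemma cabs_rotation_sum_le r b p m : 0 <= r ->
  (2 * r)%:C * b = (1 +i* r) * p + (1 -i* r) * m ->
  2 * r * cabs b <= Num.sqrt (1 + r ^+ 2) * (cabs p + cabs m).
Proof.
move=> r0 decomp; have := cabsD ((1 +i* r) * p) ((1 -i* r) * m).
rewrite -decomp !cabsM cabs_real ger0_norm ?mulr_ge0 //.
by rewrite cabs_complex (cabs_complex (- r)) sqrrN mulrDr.
Qed.

Lemma cabs_mul_le_of_sum r q w a b : a + b = (2 : R)%:C * q * w ->
  cabs a <= r -> cabs b <= r -> cabs q * cabs w <= r.
Proof.
move=> ab ar br; have := cabsD a b.
rewrite ab !cabsM cabs_real ger0_norm // -mulrA; lra.
Qed.

End ComplexModulus.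

Section HermitianForm.
Variables (R : realType) (V : lmodType R[i]).
Implicit Types (f h k : V -> V -> R[i]) (x y z : V).

Definition hermitian_form f : Prop :=
  (forall x y z (c : R[i]), f (x + c *: y) z = f x z + c * f y z) /\
  (forall x y, f y x = conjc (f x y)).

Lemma hermitian_form_diag f z : hermitian_form f -> f z z = (Re (f z z))%:C.
Proof. by case=> _ f_herm; apply: conjc_fixE; rewrite -f_herm. Qed.

Lemma form_cauchy_schwarz f x y : hermitian_form f -> (forall z, 0 <= f z z) ->
  cabs (f x y) ^+ 2 <= Re (f x x) * Re (f y y).
Proof.
case=> f_lin f_herm f_psd.
have f_conjlin z u v (c : R[i]) : f z (u + c *: v) = f z u + conjc c * f z v.
  by rewrite f_herm f_lin rmorphD rmorphM /= -!f_herm.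
apply: le_mul_of_quadratic_ge0; [exact/Re_ge0 | exact: sqr_ge0 |] => s.
(* discriminant argument: f(x - s b y, x - s b y) >= 0 for real s, where b = f(x, y) *)
have := f_psd (x + ((- s)%:C * f x y) *: y).
rewrite f_lin !f_conjlin (f_herm x y) conjc_realM.
rewrite [f x x]ge0_ReE // [f y y]ge0_ReE //.
move: (f x y) (Re (f x x)) (Re (f y y)) => b p q.
suff -> : p%:C + (- s)%:C * conjc b * b +
          (- s)%:C * b * (conjc b + (- s)%:C * conjc b * q%:C) =
          (p - 2 * s * cabs b ^+ 2 + s ^+ 2 * cabs b ^+ 2 * q)%:C by rewrite ler0c.
move: (cabs b ^+ 2) (sqr_cabs b) => m mE.
by rewrite !(rmorphD, rmorphN, rmorphM, rmorphXn, rmorph_nat) /= mE; ring.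
Qed.

Lemma hermitian_form_comb h k (t e : R) : hermitian_form h -> hermitian_form k ->
  hermitian_form (fun x y => t%:C * h x y + e%:C * k x y).
Proof.
case=> h_lin h_herm [k_lin k_herm]; split=> [x y z c|x y].
  by rewrite h_lin k_lin; move: (h x z) (h y z) (k x z) (k y z) => ? ? ? ?; ring.
by rewrite h_herm k_herm rmorphD /= !conjc_realM.
Qed.

Lemma hermitian_sector_bound h k (t : R) : hermitian_form h -> hermitian_form k -> 0 < t ->
  (forall z, `|Re (k z z)| <= t * Re (h z z)) -> forall x y,
  cabs (h x y + 'i * k x y) ^+ 2 <= (1 + t ^+ 2) * (Re (h x x) * Re (h y y)).
Proof.
move=> hH kH t0 hk_sector x y.
pose P (e : R) x y := t%:C * h x y + e%:C * k x y.
have P_diag e z : Re (P e z z) = t * Re (h z z) + e * Re (k z z).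
  by rewrite /P [h z z](hermitian_form_diag _ hH) [k z z](hermitian_form_diag _ kH) -!rmorphM -rmorphD.
have P_psd e z : `|e| <= 1 -> 0 <= P e z z.
  move=> e1; rewrite [P e z z](hermitian_form_diag _ (hermitian_form_comb t e hH kH)) ler0c P_diag.
  have : `|e * Re (k z z)| <= t * Re (h z z).
    by apply: le_trans (hk_sector z); rewrite normrM ler_piMl.
  by rewrite ler_norml => /andP[]; lra.
have P_cs e : `|e| <= 1 -> cabs (P e x y) ^+ 2 <= Re (P e x x) * Re (P e y y).
  move=> e1; apply: (form_cauchy_schwarz _ _ (hermitian_form_comb t e hH kH)).
  by move=> z; apply: P_psd.
have e1 : `|1 : R| <= 1 by rewrite normr1.
have eN1 : `|-1 : R| <= 1 by rewrite normrN normr1.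
have tri := cabs_rotation_sum_le (ltW t0) (rotation_decomp t (h x y) (k x y)).
have sum_le : (cabs (P 1 x y) + cabs (P (-1) x y)) ^+ 2 <=
    4 * t ^+ 2 * (Re (h x x) * Re (h y y)).
  have -> : 4 * t ^+ 2 * (Re (h x x) * Re (h y y)) =
      (Re (P 1 x x) + Re (P (-1) x x)) * (Re (P 1 y y) + Re (P (-1) y y)).
    by rewrite !P_diag; move: (Re (h x x)) (Re (k x x)) (Re (h y y)) (Re (k y y)) => ? ? ? ?; ring.
  by apply: sqr_add_le_mul; rewrite ?cabs_ge0 ?Re_ge0 ?P_psd ?P_cs.
exact: le_sqr_of_rotation_bound t0 (cabs_ge0 _) tri sum_le.
Qed.

End HermitianForm.

Section InnerProduct.
Variables (R : realType) (n : nat).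
Local Notation C := R[i].
Implicit Types (x y z : 'cV[C]_n) (c : C) (M : 'M[C]_n).

Lemma cinnerDl x y z : cinner (x + y) z = cinner x z + cinner y z.
Proof. by rewrite /cinner -big_split; apply: eq_bigr => i _; rewrite mxE mulrDl. Qed.

Lemma cinnerZl c x z : cinner (c *: x) z = c * cinner x z.
Proof. by rewrite /cinner mulr_sumr; apply: eq_bigr => i _; rewrite mxE mulrA. Qed.

Lemma cinnerC x y : cinner y x = conjc (cinner x y).
Proof.
by rewrite /cinner rmorph_sum; apply: eq_bigr => i _; rewrite /cconj rmorphM /= conjcK mulrC.
Qed.

Lemma cinnerZr c x y : cinner x (c *: y) = conjc c * cinner x y.
Proof. by rewrite cinnerC cinnerZl rmorphM /= -cinnerC. Qed.

Lemma cinnerDr x y z : cinner x (y + z) = cinner x y + cinner x z.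
Proof. by rewrite cinnerC cinnerDl rmorphD /= -!cinnerC. Qed.

Lemma cinnerNr x y : cinner x (- y) = - cinner x y.
Proof. by rewrite -scaleN1r cinnerZr rmorphN1 mulN1r. Qed.

Lemma cinnerNl x y : cinner (- x) y = - cinner x y.
Proof. by rewrite -scaleN1r cinnerZl mulN1r. Qed.

Lemma cinner_ge0 x : 0 <= cinner x x.
Proof. by apply: sumr_ge0 => i _; rewrite mulcJ_ge0. Qed.

Lemma cinner_hermitian : hermitian_form (@cinner R n).
Proof. by split=> [x y z c|x y]; rewrite ?cinnerDl ?cinnerZl -?cinnerC. Qed.

Lemma cinner_cauchy_schwarz x y :
  cabs (cinner x y) ^+ 2 <= Re (cinner x x) * Re (cinner y y).
Proof. exact: (form_cauchy_schwarz _ _ cinner_hermitian cinner_ge0). Qed.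

Lemma vnorm_ge0 x : 0 <= vnorm x.
Proof. exact: sqrtr_ge0. Qed.

Lemma sqr_vnorm x : vnorm x ^+ 2 = Re (cinner x x).
Proof. by rewrite sqr_sqrtr // Re_ge0 // cinner_ge0. Qed.

Lemma vnorm_eq1 x : (vnorm x = 1) <-> (cinner x x = 1).
Proof.
split=> [x1|xx1]; last by rewrite /vnorm xx1 /= sqrtr1.
by rewrite [LHS]ge0_ReE ?cinner_ge0 // -sqr_vnorm x1 expr1n.
Qed.

Lemma cabs_cinner_le x y : vnorm y = 1 -> cabs (cinner x y) <= vnorm x.
Proof.
move=> y1; rewrite -(ler_pXn2r (n := 2)) ?nnegrE ?cabs_ge0 ?vnorm_ge0 //.
by have := cinner_cauchy_schwarz x y; rewrite -!sqr_vnorm y1 expr1n mulr1.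
Qed.

Lemma cinner_adjmx M x y : cinner (adjmx M *m x) y = cinner x (M *m y).
Proof.
rewrite /cinner /adjmx.
under eq_bigr do rewrite mxE big_distrl /=.
under [RHS]eq_bigr do rewrite mxE /cconj rmorph_sum big_distrr /=.
rewrite exchange_big; apply: eq_bigr => i _; apply: eq_bigr => j _.
by rewrite !mxE /cconj rmorphM /=; ring.
Qed.

Lemma selfadjoint_hermitian M : adjmx M = M -> hermitian_form (fun x y => cinner (M *m x) y).
Proof.
move=> MM; split=> [x y z c|x y]; first by rewrite mulmxDr -scalemxAr cinnerDl cinnerZl.
by rewrite -cinnerC -{1}MM cinner_adjmx.
Qed.

End InnerProduct.

(* I(A) = (A - A^* )/(2i), written as R(-iA) *)
Definition imagpart (R : realType) n (A : 'M[R[i]]_n) : 'M[R[i]]_n := realpart (- 'i *: A).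

Section RealPart.
Variables (R : realType) (n : nat).
Local Notation C := R[i].
Implicit Types (x y : 'cV[C]_n) (c : C) (M N A : 'M[C]_n).

Lemma adjmxD M N : adjmx (M + N) = adjmx M + adjmx N.
Proof. by apply/matrixP => i j; rewrite !mxE /cconj rmorphD. Qed.

Lemma adjmxZ c M : adjmx (c *: M) = conjc c *: adjmx M.
Proof. by apply/matrixP => i j; rewrite !mxE /cconj rmorphM. Qed.

Lemma adjmxK M : adjmx (adjmx M) = M.
Proof. by apply/matrixP => i j; rewrite !mxE /cconj conjcK. Qed.

Lemma adjmx_realpart A : adjmx (realpart A) = realpart A.
Proof. by rewrite /realpart adjmxZ adjmxD adjmxK addrC conjc_inv conjc_nat. Qed.

Lemma realpart_hermitian A : hermitian_form (fun x y => cinner (realpart A *m x) y).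
Proof. exact/selfadjoint_hermitian/adjmx_realpart. Qed.

Lemma imagpart_hermitian A : hermitian_form (fun x y => cinner (imagpart A *m x) y).
Proof. exact: realpart_hermitian. Qed.

Lemma cinner_realpart A x y :
  cinner (realpart A *m x) y = 2%:R^-1 * (cinner (A *m x) y + conjc (cinner (A *m y) x)).
Proof.
by rewrite /realpart -scalemxAl mulmxDl cinnerZl cinnerDl cinner_adjmx [cinner x _]cinnerC.
Qed.

Lemma cinner_realpart_diag A x : cinner (realpart A *m x) x = (Re (cinner (A *m x) x))%:C.
Proof. by rewrite cinner_realpart ReJ_add mulrC. Qed.

Lemma cinner_imagpart_diag A x : cinner (imagpart A *m x) x = (Im (cinner (A *m x) x))%:C.
Proof.
rewrite cinner_realpart_diag -scalemxAl cinnerZl.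
by case: (cinner _ _) => a b /=; congr _%:C; ring.
Qed.

Lemma cinner_realpart_imagpart A x y :
  cinner (A *m x) y = cinner (realpart A *m x) y + 'i * cinner (imagpart A *m x) y.
Proof.
rewrite !cinner_realpart -!scalemxAl !cinnerZl !conjc_Ni.
move: (cinner (A *m x) y) (conjc _) => b w.
have ii : 'i * 'i = -1 :> C by rewrite -expr2 sqr_i.
transitivity (2%:R^-1 * (b + w) + 2%:R^-1 * (- ('i * 'i) * b + ('i * 'i) * w)); last by ring.
by rewrite ii; field.
Qed.

End RealPart.

Section Suprema.
Variables (R : realType) (n : nat).
Local Notation C := R[i].
Implicit Types (x y z : 'cV[C]_n) (M : 'M[C]_n) (q : C).

Lemma norm_coord_le1 x j : vnorm x = 1 -> `|x j 0| <= 1.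
Proof.
move/vnorm_eq1 => x1; rewrite -(expr_le1 (n := 2)) // sqr_normc -x1 /cinner.
by rewrite (bigD1 j) //= lerDl; apply: sumr_ge0 => i _; rewrite mulcJ_ge0.
Qed.

Lemma vnorm_mulmx_bounded M : exists K, forall x, vnorm x = 1 -> vnorm (M *m x) <= K.
Proof.
exists (Num.sqrt (Re (\sum_i (\sum_j `|M i j|) ^+ 2))) => x x1; apply: ler_wsqrtr.
suff : cinner (M *m x) (M *m x) <= \sum_i (\sum_j `|M i j|) ^+ 2 by rewrite lecE => /andP[].
apply: ler_sum => i _; rewrite /cconj -sqr_normc lerXn2r ?nnegrE ?sumr_ge0 //.
rewrite mxE; apply: le_trans (ler_norm_sum _ _ _) _.
by apply: ler_sum => j _; rewrite normrM ler_piMr ?norm_coord_le1.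
Qed.

Lemma opnorm_ge M x : vnorm x = 1 -> vnorm (M *m x) <= opnorm M.
Proof.
move=> x1; have [K MK] := vnorm_mulmx_bounded M.
by apply: ub_le_sup; [exists K => _ [z z1 <-]; apply: MK | exists x].
Qed.

Lemma opnorm_ge0 M : 0 <= opnorm M.
Proof. by apply: sup_ge0 => _ [x _ <-]; apply: vnorm_ge0. Qed.

Lemma cabs_cinner_le_opnorm M x : vnorm x = 1 -> cabs (cinner (M *m x) x) <= opnorm M.
Proof. by move=> x1; apply: le_trans (cabs_cinner_le _ x1) (opnorm_ge _ x1). Qed.

Lemma qnumrad_ge M q x y : vnorm x = 1 -> vnorm y = 1 -> cinner x y = q ->
  cabs (cinner (M *m x) y) <= qnumrad q M.
Proof.
move=> x1 y1 xy; have [K MK] := vnorm_mulmx_bounded M; apply: ub_le_sup; last by exists x, y.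
exists K => _ [u [v [u1 v1 _ ->]]].
exact: le_trans (cabs_cinner_le _ v1) (MK u u1).
Qed.

Lemma qnumrad_ge0 M q : 0 <= qnumrad q M.
Proof. by apply: sup_ge0 => _ [x [y [_ _ _ ->]]]; apply: cabs_ge0. Qed.

Lemma qnumrad_le M q (c b : R) : 0 <= c -> 0 <= b ->
  (forall x y, vnorm x = 1 -> vnorm y = 1 -> cinner x y = q ->
     c * cabs (cinner (M *m x) y) <= b) ->
  c * qnumrad q M <= b.
Proof.
rewrite le_eqVlt => /predU1P[<- b0 _|c_gt0 b0 cMb]; first by rewrite mul0r.
rewrite mulrC -ler_pdivlMr //; apply: sup_le_of_ge0_ub => [|_ [x [y [x1 y1 xy ->]]]].
  by rewrite divr_ge0 // ltW.
by rewrite ler_pdivlMr // mulrC cMb.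
Qed.

Lemma qnumrad_ge_diagl M q x y : vnorm x = 1 -> vnorm y = 1 -> cinner x y = q ->
  cabs q * cabs (cinner (M *m x) x) <= qnumrad q M.
Proof.
move=> x1 y1 xy; have xx := iffLR (vnorm_eq1 x) x1; have yy := iffLR (vnorm_eq1 y) y1.
have yx : cinner y x = conjc q by rewrite cinnerC xy.
pose v := ((2 : R)%:C * conjc q) *: x - y.
have xv : cinner x v = q.
  by rewrite cinnerDr cinnerNr cinnerZr conjc_realM conjcK xx xy; ring.
have v1 : vnorm v = 1.
  apply/vnorm_eq1; rewrite cinnerDl cinnerNl !cinnerDr !cinnerNr !cinnerZl !cinnerZr.
  by rewrite conjc_realM conjcK xx xy yx yy; ring.
have sum : cinner (M *m x) y + cinner (M *m x) v = (2 : R)%:C * q * cinner (M *m x) x.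
  by rewrite cinnerDr cinnerNr cinnerZr conjc_realM conjcK; ring.
exact: cabs_mul_le_of_sum sum (qnumrad_ge M x1 y1 xy) (qnumrad_ge M x1 v1 xv).
Qed.

Lemma qnumrad_ge_diagr M q x y : vnorm x = 1 -> vnorm y = 1 -> cinner x y = q ->
  cabs q * cabs (cinner (M *m y) y) <= qnumrad q M.
Proof.
move=> x1 y1 xy; have xx := iffLR (vnorm_eq1 x) x1; have yy := iffLR (vnorm_eq1 y) y1.
have yx : cinner y x = conjc q by rewrite cinnerC xy.
pose u := ((2 : R)%:C * q) *: y - x.
have uy : cinner u y = q by rewrite cinnerDl cinnerNl cinnerZl yy xy; ring.
have u1 : vnorm u = 1.
  apply/vnorm_eq1; rewrite cinnerDl cinnerNl !cinnerDr !cinnerNr !cinnerZl !cinnerZr.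
  by rewrite conjc_realM xx xy yx yy; ring.
have sum : cinner (M *m x) y + cinner (M *m u) y = (2 : R)%:C * q * cinner (M *m y) y.
  by rewrite mulmxBr -scalemxAr cinnerDl cinnerNl cinnerZl; ring.
exact: cabs_mul_le_of_sum sum (qnumrad_ge M x1 y1 xy) (qnumrad_ge M u1 y1 uy).
Qed.

End Suprema.

Section Sectorial.
Variables (R : realType) (n : nat) (alpha : R) (A : 'M[R[i]]_n).
Hypothesis A_sect : sectorial alpha A.
Implicit Types (x y z : 'cV[R[i]]_n).

Lemma sectorial_diag z :
  0 <= Re (cinner (A *m z) z) /\
  `|Im (cinner (A *m z) z)| <= tan alpha * Re (cinner (A *m z) z).
Proof.
have [zz_gt0|zz_le0] := ltrP 0 (Re (cinner z z)); last first.
  have zz_eq0 : Re (cinner z z) = 0 by apply/le_anti; rewrite zz_le0 Re_ge0 ?cinner_ge0.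
  have -> : cinner (A *m z) z = 0.
    apply: Normc.eq0_normc; apply/eqP; rewrite -sqrf_eq0 eq_le sqr_ge0 andbT.
    by have := cinner_cauchy_schwarz (A *m z) z; rewrite zz_eq0 mulr0.
  by rewrite /= normr0 mulr0.
pose s := (Num.sqrt (Re (cinner z z)))^-1.
have ss : s * s = (Re (cinner z z))^-1 by rewrite -invfM -expr2 sqr_sqrtr ?ltW.
have scale (M : 'M[R[i]]_n) : cinner (M *m (s%:C *: z)) (s%:C *: z) = (s * s)%:C * cinner (M *m z) z.
  by rewrite -scalemxAr cinnerZl cinnerZr conjc_realC mulrA -rmorphM.
have w1 : vnorm (s%:C *: z) = 1.
  apply/vnorm_eq1; have := scale 1%:M; rewrite !mul1mx => ->.
  by rewrite [cinner z z]ge0_ReE ?cinner_ge0 // ss -rmorphM mulVf ?gt_eqF.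
have [] : sector alpha (cinner (A *m (s%:C *: z)) (s%:C *: z)) by apply: A_sect; exists (s%:C *: z).
rewrite scale ss Re_realM Im_realM normrM gtr0_norm ?invr_gt0 // mulrCA.
by rewrite ler_pM2l ?invr_gt0 // pmulr_rgt0 ?invr_gt0 // => /ltW.
Qed.

Lemma cabs_cinner_realpart_diag z :
  cabs (cinner (realpart A *m z) z) = Re (cinner (A *m z) z).
Proof. by rewrite cinner_realpart_diag cabs_real ger0_norm //; case: (sectorial_diag z). Qed.

Lemma sectorial_cinner_le (t : R) x y : 0 < t -> tan alpha <= t ->
  cabs (cinner (A *m x) y) ^+ 2 <=
  (1 + t ^+ 2) * (Re (cinner (A *m x) x) * Re (cinner (A *m y) y)).
Proof.
move=> t_gt0 tan_le.
have := hermitian_sector_bound (realpart_hermitian A) (imagpart_hermitian A) t_gt0 _ x y.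
rewrite -(cinner_realpart_imagpart A x y) !cinner_realpart_diag /=; apply=> z.
rewrite cinner_imagpart_diag cinner_realpart_diag /=.
have [Re_ge0 Im_le] := sectorial_diag z.
by apply: le_trans Im_le _; rewrite ler_wpM2r.
Qed.

Hypotheses (alpha_ge0 : 0 <= alpha) (alpha_lt : alpha < pi / 2).

Lemma sectorial_sqr_cinner_le x y :
  (cos alpha * cabs (cinner (A *m x) y)) ^+ 2 <=
  Re (cinner (A *m x) x) * Re (cinner (A *m y) y).
Proof.
have [Rx_ge0 _] := sectorial_diag x; have [Ry_ge0 _] := sectorial_diag y.
have cos_gt0 := cos_gt0_lt_pihalf alpha_ge0 alpha_lt.
have c2_gt0 : 0 < cos alpha ^+ 2 by rewrite exprn_gt0.
rewrite exprMn; have [tan_gt0|tan_le0] := ltrP 0 (tan alpha).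
  have := sectorial_cinner_le x y tan_gt0 (lexx _).
  rewrite -cos2_tan2 ?gt_eqF // => h.
  apply: le_trans (ler_wpM2l (ltW c2_gt0) h) _.
  by rewrite !mulrA mulfV ?gt_eqF // mul1r.
(* here alpha = 0, so every t > 0 is admissible; let t tend to 0 *)
have : cabs (cinner (A *m x) y) ^+ 2 <= Re (cinner (A *m x) x) * Re (cinner (A *m y) y).
  apply: le_of_forall_le_mul; first exact: mulr_ge0.
  by move=> t t_gt0; apply: sectorial_cinner_le t_gt0 (le_trans tan_le0 (ltW t_gt0)).
by apply: le_trans; rewrite ler_piMl ?sqr_ge0 // exprn_ile1 ?cos_le1 ?ltW.
Qed.

Lemma sectorial_cos_le_max x y :
  cos alpha * cabs (cinner (A *m x) y) <=
  Num.max (Re (cinner (A *m x) x)) (Re (cinner (A *m y) y)).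
Proof.
have [Rx_ge0 _] := sectorial_diag x; have [Ry_ge0 _] := sectorial_diag y.
have max_ge0 : 0 <= Num.max (Re (cinner (A *m x) x)) (Re (cinner (A *m y) y)).
  by rewrite le_max Rx_ge0.
have cos_ge0 := ltW (cos_gt0_lt_pihalf alpha_ge0 alpha_lt).
rewrite -(ler_pXn2r (n := 2)) ?nnegrE ?mulr_ge0 ?cabs_ge0 //.
apply: le_trans (sectorial_sqr_cinner_le x y) _.
by rewrite expr2 ler_pM // le_max lexx ?orbT.
Qed.

End Sectorial.

Theorem mainTheorem5 (R : realType) (n : nat) (alpha : R) (A : 'M[R[i]]_n)
    (q : R[i]) :
  (2 <= n)%N -> 0 <= alpha -> alpha < pi / 2 -> sectorial alpha A ->
  0 < cabs q -> cabs q <= 1 ->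
  cos alpha * qnumrad q A <= opnorm (realpart A) /\
  cabs q * cos alpha * qnumrad q A <= qnumrad q (realpart A).
Proof.
move=> _ alpha_ge0 alpha_lt A_sect _ _.
have cos_ge0 := ltW (cos_gt0_lt_pihalf alpha_ge0 alpha_lt).
have cos_le_max := sectorial_cos_le_max A_sect alpha_ge0 alpha_lt.
split.
- apply: qnumrad_le => [||x y x1 y1 _]; [exact: cos_ge0 | exact: opnorm_ge0 |].
  apply: le_trans (cos_le_max x y) _.
  by rewrite ge_max -!(cabs_cinner_realpart_diag A_sect) !cabs_cinner_le_opnorm.
- apply: qnumrad_le => [||x y x1 y1 xy]; [exact: mulr_ge0 (cabs_ge0 q) cos_ge0 | exact: qnumrad_ge0 |].
  rewrite -mulrA; apply: le_trans (ler_wpM2l (cabs_ge0 q) (cos_le_max x y)) _.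
  rewrite maxr_pMr ?cabs_ge0 // ge_max -!(cabs_cinner_realpart_diag A_sect).
  by rewrite (qnumrad_ge_diagl _ x1 y1 xy) (qnumrad_ge_diagr _ x1 y1 xy).
Qed.
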